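(* Let $F$ and $G$ be one-dimensional formal groups over a commutative ring $R$. Then for every $n$ there is a natural isomorphism $T_1 H^n(F;G)\cong H^n(F;T_1G)$, where $T_1G\cong\hat{\mathbb{G}}_a$.
   Context: For an $R$-algebra $S$, the Lubin–Tate cochain group $A^n(F;G)(S)$ is the group (under the group law of $G$) of morphisms of formal schemes $F^{\times n}\to G$ over $S$ (in coordinates: power series in $n$ variables with zero constant term, composed with the formal group laws). These form a cochain complex with coboundary $\delta$ induced by the group law of $F$: $(\delta f)(x_0,\dots,x_n)=f(x_1,\dots,x_n)-_G f(x_0+_Fx_1,x_2,\dots)+_G\cdots\pm_G f(x_0,\dots,x_{n-1})$ (standard alternating sum of face maps, with $G$-operations). $H^n(F;G)(S)$ is the $n$-th cohomology of this complex. For a group-valued functor $X$ on $R$-algebras, the tangent space at the identity is $T_1X(S)=\ker\big(X(S[\epsilon]/\epsilon^2)\to X(S)\big)$ induced by $\epsilon\mapsto 0$. *)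

From HB Require Import structures.
From mathcomp Require Import all_boot all_algebra ring.
Set Implicit Arguments. Unset Strict Implicit. Unset Printing Implicit Defensive.
Import GRing.Theory.
Local Open Scope ring_scope.

Section Dual.
Variable S : comPzRingType.
Definition dual : Type := (S * S)%type.
HB.instance Definition _ := GRing.Zmodule.copy dual (S * S)%type.
Definition dual_one : dual := (1, 0).
Definition dual_mul (x y : dual) : dual := (x.1 * y.1, x.1 * y.2 + x.2 * y.1).
Lemma dual_mulA : associative dual_mul.
Proof. by move=> [a b] [c d] [e f]; rewrite /dual_mul /=; congr pair; ring. Qed.
Lemma dual_mulC : commutative dual_mul.
Proof. by move=> [a b] [c d]; rewrite /dual_mul /=; congr pair; ring. Qed.
Lemma dual_mul1 : left_id dual_one dual_mul.
Proof. by move=> [a b]; rewrite /dual_mul /=; congr pair; ring. Qed.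
Lemma dual_mulDl : left_distributive dual_mul +%R.
Proof. by move=> [a b] [c d] [e f]; rewrite /dual_mul /=; congr pair; rewrite /= ?mulrDl ?mulrDr; ring. Qed.
HB.instance Definition _ := GRing.Zmodule_isComPzRing.Build dual dual_mulA dual_mulC dual_mul1 dual_mulDl.
End Dual.

Definition mon (n : nat) := 'I_n -> nat.
Definition mdeg n (m : mon n) : nat := (\sum_(i < n) m i)%N.

Section PowerSeries.
Variable T : comPzRingType.

Definition ps (n : nat) := mon n -> T.

Definition ps_zero n : ps n := fun _ => 0.
Definition ps_add n (f g : ps n) : ps n := fun m => f m + g m.
Definition ps_opp n (f : ps n) : ps n := fun m => - f m.
Definition ps_one n : ps n := fun m => if [forall i, m i == 0%N] then 1 else 0.
Arguments ps_zero n : clear implicits.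
Arguments ps_one n : clear implicits.
Definition ps_var n (i : 'I_n) : ps n :=
  fun m => if [forall j, m j == (j == i) :> nat] then 1 else 0.
Definition ps_mul n (f g : ps n) : ps n := fun m =>
  \sum_(a : {ffun 'I_n -> 'I_(mdeg m).+1} | [forall i, (a i <= m i)%N])
     f (fun i => nat_of_ord (a i)) * g (fun i => (m i - a i)%N).
Definition ps_exp n (f : ps n) (k : nat) : ps n := iter k (ps_mul f) (ps_one n).
Definition ps_prodexp k n (g : 'I_k -> ps n) (e : mon k) : ps n :=
  \big[@ps_mul n/ps_one n]_(i < k) ps_exp (g i) (e i).
(* Substitution f(g_1,...,g_k), meaningful when all g_i have zero constant
   term: then only exponents e with |e| <= |m| contribute to the
   coefficient of m, so the sum below is the full (finite) sum. *)
Definition ps_subst k n (f : ps k) (g : 'I_k -> ps n) : ps n := fun m =>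
  \sum_(e : {ffun 'I_k -> 'I_(mdeg m).+1})
     f (fun i => nat_of_ord (e i)) * ps_prodexp g (fun i => nat_of_ord (e i)) m.

Definition zero_const n (f : ps n) : Prop := f (fun _ => 0%N) = 0.

Definition vec2 n (a b : ps n) : 'I_2 -> ps n :=
  fun i => if i == ord0 then a else b.

Definition is_fgl (F : ps 2) : Prop :=
  [/\ ps_subst F (vec2 (ps_var (ord0 : 'I_1)) (ps_zero 1)) = ps_var ord0,
      ps_subst F (vec2 (ps_zero 1) (ps_var (ord0 : 'I_1))) = ps_var ord0,
      ps_subst F (vec2 (ps_subst F (vec2 (ps_var (0 : 'I_3)) (ps_var (1 : 'I_3))))
                       (ps_var (2 : 'I_3)))
        = ps_subst F (vec2 (ps_var (0 : 'I_3))
                       (ps_subst F (vec2 (ps_var (1 : 'I_3)) (ps_var (2 : 'I_3))))) &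
      ps_subst F (vec2 (ps_var (1 : 'I_2)) (ps_var (0 : 'I_2))) = F].

Definition is_fgl_inv (G : ps 2) (iG : ps 1) : Prop :=
  zero_const iG /\ ps_subst G (vec2 (ps_var ord0) iG) = ps_zero 1.

Definition ga_law : ps 2 := ps_add (ps_var ord0) (ps_var (1 : 'I_2)).
Definition ga_inv : ps 1 := ps_opp (ps_var ord0).

Definition addG (G : ps 2) n (f g : ps n) : ps n := ps_subst G (vec2 f g).
Definition negG (iG : ps 1) n (f : ps n) : ps n := ps_subst iG (fun _ => f).

(* i-th face map F^{n+1} -> F^n, 0 <= i <= n+1 :
   i = 0     : (x_1, ..., x_n)
   1<=i<=n   : (x_0, ..., x_{i-1} +_F x_i, ..., x_n)
   i = n+1   : (x_0, ..., x_{n-1})                        *)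
Definition face (F : ps 2) n (i : nat) : 'I_n -> ps n.+1 := fun j =>
  if (j.+1 < i)%N then ps_var (inord j)
  else if j.+1 == i then ps_subst F (vec2 (ps_var (inord j)) (ps_var (inord j.+1)))
  else ps_var (inord j.+1).
Arguments face F n i : clear implicits.

Definition delta (F G : ps 2) (iG : ps 1) n (f : ps n) : ps n.+1 :=
  \big[@addG G n.+1/ps_zero n.+1]_(i < n.+2)
     (if odd i then negG iG (ps_subst f (face F n i)) else ps_subst f (face F n i)).

Definition cochain n (f : ps n) : Prop := zero_const f.
Definition cocycle (F G : ps 2) (iG : ps 1) n (f : ps n) : Prop :=
  cochain f /\ delta F G iG f = ps_zero n.+1.
Definition coboundary (F G : ps 2) (iG : ps 1) n : ps n -> Prop :=
  match n as n0 return ps n0 -> Prop with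
  | 0 => fun f => f = ps_zero 0
  | k.+1 => fun f => exists g : ps k, cochain g /\ f = delta F G iG g
  end.
Definition cohomologous (F G : ps 2) (iG : ps 1) n (f g : ps n) : Prop :=
  exists b, coboundary F G iG b /\ f = addG G g b.

End PowerSeries.
Arguments ps_zero {T} n.
Arguments ps_one {T} n.
Arguments face {T} F n i.

Definition ps_map (T T' : comPzRingType) (h : T -> T') n (f : ps T n) : ps T' n :=
  fun m => h (f m).

Definition to_dual (S : comPzRingType) (s : S) : dual S := (s, 0).
Definition dual_map (S S' : comPzRingType) (h : S -> S') (x : dual S) : dual S' :=
  (h x.1, h x.2).
Definition dual_red (S : comPzRingType) (x : dual S) : S := x.1.

(* z : ps (dual S) n represents an element of T_1 H^n(F;G)(S):
   a cocycle over S[eps] whose image in H^n(F;G)(S) is trivial. *)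
Definition inT1 (R S : comPzRingType) (phi : R -> S) (F G : ps R 2) (iG : ps R 1)
    n (z : ps (dual S) n) : Prop :=
  let phid := fun r => to_dual (phi r) in
  cocycle (ps_map phid F) (ps_map phid G) (ps_map phid iG) z /\
  cohomologous (ps_map phi F) (ps_map phi G) (ps_map phi iG)
               (ps_map (@dual_red S) z) (ps_zero n).

From Pilot Require Import Defs.
From HB Require Import structures.
From mathcomp Require Import all_boot all_algebra.
From mathcomp Require Import mpoly.
From Stdlib Require Import FunctionalExtensionality.
Set Implicit Arguments. Unset Strict Implicit. Unset Printing Implicit Defensive.
Import GRing.Theory.
Local Open Scope ring_scope.

(* Represent T_1 by cochains z over S[eps] whose reduction red z mod eps is
   a coboundary over S.  The difference z -_G incl (red z) reduces to zero, so
   it is eps * w for a unique cochain w over S, the tangent part of z.  Since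
   eps^2 = 0 and G(x,0) = x, G(0,y) = y, the law G is plain addition on
   eps-multiples, so the coboundary with values in G becomes the coboundary
   with values in Ga.  Everything about z then splits into a statement about
   red z and one about w.  The substitution laws for power series used
   throughout are obtained by comparison with polynomial truncations, whose
   composition is associative. *)

(** * Substitution of power series via polynomial truncations *)

Definition mnm_of n (m : mon n) : 'X_{1..n} := [multinom m i | i < n].

Lemma mdeg_mnm_of n (m : mon n) : mdeg (mnm_of m) = Defs.mdeg m.
Proof. by rewrite mdegE; apply: eq_bigr => i _; rewrite mnmE. Qed.

Lemma mnm_ofK n (m : 'X_{1..n}) : mnm_of (fun i => m i) = m.
Proof. by apply/mnmP => i; rewrite mnmE. Qed.

Lemma mnm_of_funK n (m : mon n) : (fun i => mnm_of m i) = m.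
Proof. by apply: functional_extensionality => i; rewrite mnmE. Qed.

Lemma mdeg_fun n (m : 'X_{1..n}) : Defs.mdeg (fun i => m i) = mdeg m.
Proof. by rewrite -mdeg_mnm_of mnm_ofK. Qed.

Lemma mnm0_fun n : (fun i : 'I_n => (0%MM : 'X_{1..n}) i) = (fun _ => 0%N).
Proof. by apply: functional_extensionality => i; rewrite mnm0E. Qed.

Lemma mnm_le_mdeg n (m : 'X_{1..n}) i : (m i <= mdeg m)%N.
Proof. by rewrite mdegE (bigD1 i) //= leq_addr. Qed.

Lemma mdeg_lem n (a b : 'X_{1..n}) : (a <= b)%MM -> (mdeg a <= mdeg b)%N.
Proof. by move/mnm_lepP => h; rewrite !mdegE; apply: leq_sum => i _; apply: h. Qed.

(* The sums in [ps_mul] and [ps_subst] range over bounded exponent functions;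
   when the summand vanishes in degree > N they are sums over 'X_{1..k < N.+1}. *)
Lemma sum_ffun_bmultinom (V : nmodType) k N (F : mon k -> V) :
  (forall e, (N < Defs.mdeg e)%N -> F e = 0) ->
  \sum_(e : {ffun 'I_k -> 'I_N.+1}) F (fun i => e i) =
  \sum_(b : 'X_{1..k < N.+1}) F (fun i => b i).
Proof.
move=> F0.
have b0P : (mdeg (0%MM : 'X_{1..k}) < N.+1)%N by rewrite mdeg0.
pose b0 : 'X_{1..k < N.+1} := BMultinom b0P.
pose h (e : {ffun 'I_k -> 'I_N.+1}) : 'X_{1..k < N.+1} :=
  insubd b0 (mnm_of (fun i => nat_of_ord (e i))).
pose h' (b : 'X_{1..k < N.+1}) : {ffun 'I_k -> 'I_N.+1} := [ffun i => inord (b i)].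
have h'K b : mnm_of (fun i => nat_of_ord (h' b i)) = b.
  apply/mnmP => i; rewrite mnmE ffunE inordK //.
  by rewrite ltnS (leq_trans (mnm_le_mdeg b i)) // -ltnS bmdeg.
have hh' b : h (h' b) = b by apply: val_inj; rewrite /h insubdK h'K //=; exact: bmdeg.
rewrite (reindex_onto h h' (P := xpredT)); last by move=> b _; exact: hh'.
rewrite [LHS](bigID (fun e : {ffun 'I_k -> 'I_N.+1} =>
                       (Defs.mdeg (fun i => nat_of_ord (e i)) <= N)%N)) /=.
rewrite [X in _ + X]big1 ?addr0; last by move=> e; rewrite -ltnNge => /F0.
apply: eq_big => e.
  apply/idP/eqP => [le|<-]; last by rewrite -mdeg_mnm_of h'K -ltnS; exact: bmdeg.
  apply/ffunP => i; rewrite /h' ffunE /h insubdK; last by rewrite -topredE /= mdeg_mnm_of ltnS.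
  by apply: val_inj; rewrite /= mnmE inordK.
move=> le; congr F; apply: functional_extensionality => i.
by rewrite /h insubdK /= ?mnmE // -topredE /= mdeg_mnm_of ltnS.
Qed.

Lemma sum_bmultinom_widen (V : nmodType) k M N (F : mon k -> V) :
  (M <= N)%N -> (forall e, (M < Defs.mdeg e)%N -> F e = 0) ->
  \sum_(b : 'X_{1..k < M.+1}) F (fun i => b i) =
  \sum_(b : 'X_{1..k < N.+1}) F (fun i => b i).
Proof.
move=> MN F0.
have hP (b : 'X_{1..k < M.+1}) : (mdeg b < N.+1)%N.
  by apply: leq_trans (bmdeg b) _; rewrite ltnS.
have b0P : (mdeg (0%MM : 'X_{1..k}) < M.+1)%N by rewrite mdeg0.
pose h (b : 'X_{1..k < M.+1}) : 'X_{1..k < N.+1} := BMultinom (hP b).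
pose h' (b : 'X_{1..k < N.+1}) : 'X_{1..k < M.+1} := insubd (BMultinom b0P) (val b).
rewrite [RHS](bigID (fun b : 'X_{1..k < N.+1} => (mdeg b <= M)%N)) /=.
rewrite [X in _ + X]big1 ?addr0; last first.
  by move=> b; rewrite -ltnNge => lt; apply: F0; rewrite mdeg_fun.
rewrite (reindex_onto h h'); last by move=> b hb; apply: val_inj; rewrite /= /h' insubdK.
symmetry; apply: eq_bigl => b /=.
have -> : h' (h b) = b by apply: val_inj; rewrite /h' insubdK //= -topredE /= bmdeg.
by rewrite eqxx andbT -ltnS bmdeg.
Qed.

Section Truncation.
Variable T : comNzRingType.

Definition ps_trunc n N (f : ps T n) : {mpoly T[n]} :=
  \sum_(k : 'X_{1..n < N.+1}) f (fun i => k i) *: 'X_[k].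

Lemma mcoeff_ps_trunc n N (f : ps T n) (k : 'X_{1..n}) :
  (ps_trunc N f)@_k = if (mdeg k <= N)%N then f (fun i => k i) else 0.
Proof.
rewrite /ps_trunc (raddf_sum (mcoeff k)) /=; under eq_bigr do rewrite mcoeffZ mcoeffX.
case: ifP => h.
  rewrite (bigD1 (BMultinom (h : (mdeg k < N.+1)%N))) //= eqxx mulr1 big1 ?addr0 //.
  by move=> b; rewrite bmeqP /= => /negbTE ->; rewrite mulr0.
apply: big1 => b _; case: eqP => [e|]; last by rewrite mulr0.
by move: (bmdeg b); rewrite e ltnS h.
Qed.

Lemma mcoeff0_ps_trunc n N (f : ps T n) : (ps_trunc N f)@_0 = f (fun _ => 0%N).
Proof. by rewrite mcoeff_ps_trunc mdeg0 mnm0_fun. Qed.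

Definition agree n N (f : ps T n) (p : {mpoly T[n]}) :=
  forall m : 'X_{1..n}, (mdeg m <= N)%N -> f (fun i => m i) = p@_m.

Definition eq_upto n N (p q : {mpoly T[n]}) :=
  forall m : 'X_{1..n}, (mdeg m <= N)%N -> p@_m = q@_m.

Definition vanish_below n d (p : {mpoly T[n]}) :=
  forall m : 'X_{1..n}, (mdeg m < d)%N -> p@_m = 0.

Lemma agree_trunc n N (f : ps T n) : agree N f (ps_trunc N f).
Proof. by move=> m h; rewrite mcoeff_ps_trunc h. Qed.

Lemma agree_eq_upto n N (f : ps T n) p q : agree N f p -> eq_upto N p q -> agree N f q.
Proof. by move=> h e m hm; rewrite h // e. Qed.

Lemma agree_eq_upto_uniq n N (f : ps T n) p q :
  agree N f p -> agree N f q -> eq_upto N p q.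
Proof. by move=> h1 h2 m hm; rewrite -h1 // h2. Qed.

Lemma ps_eq_agree n (f g : ps T n) :
  (forall N, exists p, agree N f p /\ agree N g p) -> f = g.
Proof.
move=> h; apply: functional_extensionality => m.
rewrite -(mnm_of_funK m); have [p [hf hg]] := h (mdeg (mnm_of m)).
by rewrite hf // hg.
Qed.

Lemma agree_one n N : agree N (ps_one n) (1 : {mpoly T[n]}).
Proof.
move=> m _; rewrite mcoeff1 /ps_one.
have -> : [forall i, m i == 0%N] = (m == 0%MM).
  apply/forallP/eqP => [h|-> i]; last by rewrite mnm0E.
  by apply/mnmP => i; rewrite mnm0E; apply/eqP.
by case: eqP.
Qed.

Lemma agree_mul n N (f g : ps T n) p q :
  agree N f p -> agree N g q -> agree N (ps_mul f g) (p * q).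
Proof.
move=> hf hg m hm; rewrite /ps_mul big_mkcond /=.
pose F (e : mon n) :=
  if [forall i, (e i <= m i)%N] then f e * g (fun i => (m i - e i)%N) else 0.
rewrite (sum_ffun_bmultinom (F := F)); last first.
  move=> e lt; rewrite /F; case: ifP => // /forallP le; exfalso.
  move: lt; rewrite ltnNge; apply/negP/negPn.
  by apply: leq_sum => i _; exact: le i.
rewrite mdeg_fun (mcoeff_poly_mul_lin _ _ (ltnSn _)) [RHS]big_mkcond /=.
apply: eq_bigr => b _; rewrite /F.
have -> : [forall i, (b i <= m i)%N] = (b <= m)%MM by apply/forallP/mnm_lepP.
case: ifP => // le; rewrite hf; last by apply: leq_trans hm; apply: mdeg_lem.
rewrite -hg; last by apply: leq_trans hm; apply: mdeg_lem; apply: lem_subr.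
by congr (_ * g _); apply: functional_extensionality => i; rewrite mnmBE.
Qed.

Lemma agree_prodexp k n N (g : 'I_k -> ps T n) (q : 'I_k -> {mpoly T[n]}) (e : mon k) :
  (forall i, agree N (g i) (q i)) ->
  agree N (ps_prodexp g e) (\prod_(i < k) q i ^+ e i).
Proof.
move=> hg; apply: (big_ind2 (agree N)); [exact: agree_one | by move=> *; apply: agree_mul|].
move=> i _; elim: (e i) => [|j IH]; first by rewrite expr0; exact: agree_one.
by rewrite exprS; apply: agree_mul.
Qed.

Lemma eq_upto_mul n N (p p' q q' : {mpoly T[n]}) :
  eq_upto N p p' -> eq_upto N q q' -> eq_upto N (p * q) (p' * q').
Proof.
move=> hp hq m hm; rewrite !(mcoeff_poly_mul_lin _ _ (ltnSn _)); apply: eq_bigr => k hk.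
rewrite hp ?hq //; apply: leq_trans hm; apply: mdeg_lem => //; exact: lem_subr.
Qed.

Lemma eq_upto_prodexp k n N (a b : 'I_k -> {mpoly T[n]}) (e : 'I_k -> nat) :
  (forall i, eq_upto N (a i) (b i)) ->
  eq_upto N (\prod_(i < k) a i ^+ e i) (\prod_(i < k) b i ^+ e i).
Proof.
move=> h; apply: (big_ind2 (eq_upto N)) => [//| * |i _]; first exact: eq_upto_mul.
by elim: (e i) => [//|j IH]; rewrite !exprS; apply: eq_upto_mul.
Qed.

Lemma vanish_below_mul n a b (p q : {mpoly T[n]}) :
  vanish_below a p -> vanish_below b q -> vanish_below (a + b) (p * q).
Proof.
move=> hp hq m hm; rewrite (mcoeff_poly_mul_lin _ _ (ltnSn _)); apply: big1 => k hk.
have E : (mdeg k + mdeg (m - k) = mdeg m)%N by rewrite -mdegD addmC submK.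
case: (ltnP (mdeg k) a) => ha; first by rewrite hp ?mul0r.
rewrite hq ?mulr0 // -(ltn_add2l (mdeg k)) E.
by apply: (leq_trans hm); rewrite leq_add2r.
Qed.

(* This is what makes the bounded sums in [ps_subst] agree with polynomial composition. *)
Lemma vanish_below_prodexp k n (q : 'I_k -> {mpoly T[n]}) (e : mon k) :
  (forall i, (q i)@_0 = 0) -> vanish_below (Defs.mdeg e) (\prod_(i < k) q i ^+ e i).
Proof.
move=> hq; rewrite /Defs.mdeg.
apply: (big_ind2 (fun a b => vanish_below a b)) => [m //| * |i _]; first exact: vanish_below_mul.
elim: (e i) => [m //|j IH]; rewrite exprS; apply: (vanish_below_mul (a := 1)) => // m.
by rewrite ltnS leqn0 mdeg_eq0 => /eqP ->; exact: hq.
Qed.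

Lemma mcoeff_comp_ps_trunc k n N (f : ps T k) (q : 'I_k -> {mpoly T[n]}) m :
  (ps_trunc N f \mPo [tuple q i | i < k])@_m =
  \sum_(b : 'X_{1..k < N.+1}) f (fun i => b i) * (\prod_(i < k) q i ^+ b i)@_m.
Proof.
rewrite /ps_trunc (raddf_sum (comp_mpoly _)) (raddf_sum (mcoeff m)); apply: eq_bigr => b _.
rewrite /= comp_mpolyZ comp_mpolyX mcoeffZ; congr (_ * _@__).
by apply: eq_bigr => i _; rewrite tnth_mktuple.
Qed.

Lemma agree_subst k n N (f : ps T k) (g : 'I_k -> ps T n) (q : 'I_k -> {mpoly T[n]}) :
  (forall i, agree N (g i) (q i)) -> (forall i, (q i)@_0 = 0) ->
  agree N (ps_subst f g) (ps_trunc N f \mPo [tuple q i | i < k]).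
Proof.
move=> hg hq m hm; rewrite /ps_subst mcoeff_comp_ps_trunc.
under eq_bigr do rewrite (agree_prodexp _ hg hm).
pose F e := f e * (\prod_(i < k) q i ^+ e i)@_m.
have F0 M : (mdeg m <= M)%N -> forall e, (M < Defs.mdeg e)%N -> F e = 0.
  move=> le e lt; rewrite /F (vanish_below_prodexp (e := e) hq) ?mulr0 //.
  by apply: leq_ltn_trans lt.
rewrite (sum_ffun_bmultinom (F := F)); last by apply: F0; rewrite mdeg_fun.
by apply: sum_bmultinom_widen; rewrite mdeg_fun //; exact: F0.
Qed.

Lemma eq_upto_comp_r k n N (p : {mpoly T[k]}) (q q' : 'I_k -> {mpoly T[n]}) :
  (forall i, eq_upto N (q i) (q' i)) ->
  eq_upto N (p \mPo [tuple q i | i < k]) (p \mPo [tuple q' i | i < k]).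
Proof.
move=> h m hm; rewrite !comp_mpolyE !(raddf_sum (mcoeff m)) /=; apply: eq_bigr => mm _.
rewrite !mcoeffZ; congr (_ * _).
under eq_bigr do rewrite tnth_mktuple.
under [in RHS]eq_bigr do rewrite tnth_mktuple.
exact: eq_upto_prodexp.
Qed.

Lemma comp_eq_upto0 k n N (r : {mpoly T[k]}) (q : 'I_k -> {mpoly T[n]}) :
  eq_upto N r 0 -> (forall i, (q i)@_0 = 0) -> eq_upto N (r \mPo [tuple q i | i < k]) 0.
Proof.
move=> hr hq m hm; rewrite mcoeff0 comp_mpolyE (raddf_sum (mcoeff m)) /= big1_seq //.
move=> mm /andP[_ hin]; rewrite mcoeffZ.
have lt : (N < mdeg mm)%N.
  by rewrite ltnNge; apply/negP => le; move: hin; rewrite mcoeff_msupp hr ?mcoeff0 ?eqxx.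
under eq_bigr do rewrite tnth_mktuple.
rewrite (vanish_below_prodexp (e := fun i => mm i) hq) ?mulr0 //.
by rewrite mdeg_fun; apply: leq_ltn_trans lt.
Qed.

Lemma eq_upto_comp_l k n N (p p' : {mpoly T[k]}) (q : 'I_k -> {mpoly T[n]}) :
  eq_upto N p p' -> (forall i, (q i)@_0 = 0) ->
  eq_upto N (p \mPo [tuple q i | i < k]) (p' \mPo [tuple q i | i < k]).
Proof.
move=> h hq m hm; apply/eqP; rewrite -subr_eq0 -mcoeffB -comp_mpolyB.
rewrite (comp_eq_upto0 (N := N)) ?mcoeff0 // => mm hmm.
by rewrite mcoeffB mcoeff0 h // subrr.
Qed.

Lemma comp_mpolyA k n j (p : {mpoly T[k]}) (q : 'I_k -> {mpoly T[n]})
    (r : 'I_n -> {mpoly T[j]}) :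
  (p \mPo [tuple q i | i < k]) \mPo [tuple r i | i < n] =
  p \mPo [tuple (q i \mPo [tuple r i | i < n]) | i < k].
Proof.
rewrite (comp_mpolyE p [tuple q i | i < k]).
rewrite (comp_mpolyE p [tuple (q i \mPo [tuple r i | i < n]) | i < k]).
rewrite (raddf_sum (comp_mpoly _)); apply: eq_bigr => mm _.
rewrite /= comp_mpolyZ rmorph_prod; congr (_ *: _); apply: eq_bigr => i _.
by rewrite rmorphXn /= !tnth_mktuple.
Qed.

Lemma mcoeff0_comp k n (p : {mpoly T[k]}) (q : 'I_k -> {mpoly T[n]}) :
  (forall i, (q i)@_0 = 0) -> (p \mPo [tuple q i | i < k])@_0 = p@_0.
Proof.
move=> hq; rewrite (@eq_upto_comp_l _ _ 0 _ (p@_0)%:MP) ?mdeg0 //.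
  by rewrite comp_mpolyC mcoeffC eqxx mulr1.
by move=> m; rewrite leqn0 mdeg_eq0 => /eqP ->; rewrite mcoeffC eqxx mulr1.
Qed.

Lemma mcoeff0_ps_trunc_zc n N (f : ps T n) : zero_const f -> (ps_trunc N f)@_0 = 0.
Proof. by rewrite mcoeff0_ps_trunc. Qed.

Lemma agree_var n N (i : 'I_n) : agree N (ps_var T i) 'X_i.
Proof.
move=> m _; rewrite mcoeffX /ps_var.
have -> : [forall j, m j == (j == i) :> nat] = (U_(i)%MM == m).
  apply/forallP/eqP => [h|<- j]; last by rewrite mnm1E [i == j]eq_sym.
  by apply/mnmP => j; rewrite mnm1E [i == j]eq_sym; apply/esym/eqP.
by case: eqP.
Qed.

Lemma agree_subst_trunc k n N (f : ps T k) (g : 'I_k -> ps T n) :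
  (forall i, zero_const (g i)) ->
  agree N (ps_subst f g) (ps_trunc N f \mPo [tuple ps_trunc N (g i) | i < k]).
Proof.
move=> hg; apply: agree_subst => i; [exact: agree_trunc | exact: mcoeff0_ps_trunc_zc].
Qed.

Lemma ps_subst0_nz k n (f : ps T k) (g : 'I_k -> ps T n) :
  (forall i, zero_const (g i)) -> ps_subst f g (fun _ => 0%N) = f (fun _ => 0%N).
Proof.
move=> hg; have := agree_subst_trunc (N := 0) f hg (m := 0%MM); rewrite mdeg0 mnm0_fun => -> //.
by rewrite mcoeff0_comp ?mcoeff0_ps_trunc // => i; exact: mcoeff0_ps_trunc_zc.
Qed.

Lemma ps_substA_nz k n j (f : ps T k) (g : 'I_k -> ps T n) (h : 'I_n -> ps T j) :
  (forall i, zero_const (g i)) -> (forall i, zero_const (h i)) ->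
  ps_subst (ps_subst f g) h = ps_subst f (fun i => ps_subst (g i) h).
Proof.
move=> hg hh; apply: ps_eq_agree => N.
have zh i := mcoeff0_ps_trunc_zc N (hh i).
have zgh i : zero_const (ps_subst (g i) h) by rewrite /zero_const ps_subst0_nz //; exact: hg.
exists ((ps_trunc N f \mPo [tuple ps_trunc N (g i) | i < k])
          \mPo [tuple ps_trunc N (h i) | i < n]); split.
  apply: agree_eq_upto (agree_subst_trunc _ hh) _; apply: eq_upto_comp_l => //.
  exact: agree_eq_upto_uniq (agree_trunc _) (agree_subst_trunc _ hg).
rewrite comp_mpolyA; apply: agree_eq_upto (agree_subst_trunc _ zgh) _.
apply: eq_upto_comp_r => i.
exact: agree_eq_upto_uniq (agree_trunc _) (agree_subst_trunc _ hh).
Qed.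

Lemma ps_subst_var_nz k n (i : 'I_k) (g : 'I_k -> ps T n) :
  (forall i, zero_const (g i)) -> ps_subst (ps_var T i) g = g i.
Proof.
move=> hg; apply: ps_eq_agree => N; exists (ps_trunc N (g i)); split; last exact: agree_trunc.
apply: agree_eq_upto (agree_subst_trunc _ hg) _.
have -> : ps_trunc N (g i) = 'X_i \mPo [tuple ps_trunc N (g i) | i < k].
  by rewrite comp_mpolyXU -tnth_nth tnth_mktuple.
apply: eq_upto_comp_l => [|j]; last exact: mcoeff0_ps_trunc_zc.
exact: agree_eq_upto_uniq (agree_trunc _) (agree_var _).
Qed.

Lemma ps_mul1_nz n (f : ps T n) : ps_mul (ps_one n) f = f.
Proof.
apply: ps_eq_agree => N; exists (ps_trunc N f); split; last exact: agree_trunc.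
by rewrite -[ps_trunc N f]mul1r; apply: agree_mul; [apply: agree_one | apply: agree_trunc].
Qed.

Lemma ps_mulC_nz n (f g : ps T n) : ps_mul f g = ps_mul g f.
Proof.
apply: ps_eq_agree => N; exists (ps_trunc N f * ps_trunc N g).
by split; [|rewrite mulrC]; apply: agree_mul; apply: agree_trunc.
Qed.

End Truncation.

(* The polynomial library needs 1 != 0; over the zero ring all series are equal. *)
Lemma trivial_ring_eq (T : comPzRingType) : (1 : T) = 0 -> forall x y : T, x = y.
Proof. by move=> h x y; rewrite -[x]mulr1 -[y]mulr1 h !mulr0. Qed.

Lemma trivial_ring_ps_eq (T : comPzRingType) :
  (1 : T) = 0 -> forall n (f g : ps T n), f = g.
Proof. by move=> h n f g; apply: functional_extensionality => m; exact: trivial_ring_eq. Qed.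

Definition nz_ring_of (T : comPzRingType) (nz : (1 : T) != 0) : comNzRingType :=
  HB.pack_for comNzRingType T (GRing.PzSemiRing_isNonZero.Build T nz).

Section Substitution.
Variable T : comPzRingType.
Local Notation zc := zero_const.

Lemma ps_subst0 k n (f : ps T k) (g : 'I_k -> ps T n) :
  (forall i, zc (g i)) -> ps_subst f g (fun _ => 0%N) = f (fun _ => 0%N).
Proof.
case: (eqVneq (1 : T) 0) => [/trivial_ring_eq h _|nz]; first exact: h.
exact: (@ps_subst0_nz (nz_ring_of nz)).
Qed.

Lemma ps_substA k n j (f : ps T k) (g : 'I_k -> ps T n) (h : 'I_n -> ps T j) :
  (forall i, zc (g i)) -> (forall i, zc (h i)) ->
  ps_subst (ps_subst f g) h = ps_subst f (fun i => ps_subst (g i) h).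
Proof.
case: (eqVneq (1 : T) 0) => [/trivial_ring_ps_eq h1 _ _|nz]; first exact: h1.
exact: (@ps_substA_nz (nz_ring_of nz)).
Qed.

Lemma ps_subst_var k n (i : 'I_k) (g : 'I_k -> ps T n) :
  (forall i, zc (g i)) -> ps_subst (ps_var T i) g = g i.
Proof.
case: (eqVneq (1 : T) 0) => [/trivial_ring_ps_eq h1 _|nz]; first exact: h1.
exact: (@ps_subst_var_nz (nz_ring_of nz)).
Qed.

Lemma ps_mul1 n (f : ps T n) : ps_mul (ps_one n) f = f.
Proof.
case: (eqVneq (1 : T) 0) => [/trivial_ring_ps_eq h1|nz]; first exact: h1.
exact: (@ps_mul1_nz (nz_ring_of nz)).
Qed.

Lemma ps_mulC n (f g : ps T n) : ps_mul f g = ps_mul g f.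
Proof.
case: (eqVneq (1 : T) 0) => [/trivial_ring_ps_eq h1|nz]; first exact: h1.
exact: (@ps_mulC_nz (nz_ring_of nz)).
Qed.

Lemma ps_mul0l n (f : ps T n) : ps_mul (ps_zero n) f = ps_zero n.
Proof. by apply: functional_extensionality => m; apply: big1 => a _; rewrite mul0r. Qed.

Lemma ps_mul0r n (f : ps T n) : ps_mul f (ps_zero n) = ps_zero n.
Proof. by apply: functional_extensionality => m; apply: big1 => a _; rewrite mulr0. Qed.

Lemma ps_subst_add k n (f f' : ps T k) (g : 'I_k -> ps T n) :
  ps_subst (ps_add f f') g = ps_add (ps_subst f g) (ps_subst f' g).
Proof.
apply: functional_extensionality => m; rewrite /ps_subst /ps_add -big_split.
by apply: eq_bigr => e _; rewrite mulrDl.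
Qed.

Lemma ps_subst_opp k n (f : ps T k) (g : 'I_k -> ps T n) :
  ps_subst (ps_opp f) g = ps_opp (ps_subst f g).
Proof.
apply: functional_extensionality => m; rewrite /ps_subst /ps_opp -sumrN.
by apply: eq_bigr => e _; rewrite mulNr.
Qed.

Lemma ps_subst_zero k n (g : 'I_k -> ps T n) : ps_subst (ps_zero k) g = ps_zero n.
Proof. by apply: functional_extensionality => m; apply: big1 => e _; rewrite mul0r. Qed.

Lemma ps_var_zc n (i : 'I_n) : zc (ps_var T i).
Proof. by rewrite /zero_const /ps_var; case: forallP => // /(_ i); rewrite eqxx. Qed.

Lemma ps_add_zc n (a b : ps T n) : zc a -> zc b -> zc (ps_add a b).
Proof. by rewrite /zero_const /ps_add => -> ->; rewrite addr0. Qed.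

Lemma ps_opp_zc n (a : ps T n) : zc a -> zc (ps_opp a).
Proof. by rewrite /zero_const /ps_opp => ->; rewrite oppr0. Qed.

Lemma ps_subst_zc k n (f : ps T k) (g : 'I_k -> ps T n) :
  zc f -> (forall i, zc (g i)) -> zc (ps_subst f g).
Proof. by move=> hf hg; rewrite /zero_const ps_subst0. Qed.

Lemma vec2_zc n (a b : ps T n) : zc a -> zc b -> forall i, zc (vec2 a b i).
Proof. by move=> ha hb i; rewrite /vec2; case: ifP. Qed.

Lemma vec2_comp (T' : comPzRingType) k n (h : ps T k -> ps T' n) (a b : ps T k) :
  (fun i => h (vec2 a b i)) = vec2 (h a) (h b).
Proof. by apply: functional_extensionality => i; rewrite /vec2; case: ifP. Qed.

Lemma ps_subst_vec2 k n (a b : ps T k) (g : 'I_k -> ps T n) :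
  (fun i => ps_subst (vec2 a b i) g) = vec2 (ps_subst a g) (ps_subst b g).
Proof. exact: (vec2_comp (fun f => ps_subst f g)). Qed.

Lemma ps_prodexp_vec2 n (a b : ps T n) (e : mon 2) :
  ps_prodexp (vec2 a b) e = ps_mul (ps_exp a (e ord0)) (ps_exp b (e (lift ord0 ord0))).
Proof. by rewrite /ps_prodexp !big_ord_recl big_ord0 [ps_mul _ (ps_one n)]ps_mulC ps_mul1. Qed.

End Substitution.

Lemma ps_map_comp (T1 T2 T3 : comPzRingType) (g : T2 -> T3) (f : T1 -> T2) n (x : ps T1 n) :
  ps_map (fun r => g (f r)) x = ps_map g (ps_map f x).
Proof. by []. Qed.

Section RingMorphismMap.
Variables (T T' : comPzRingType) (h : {rmorphism T -> T'}).

Lemma ps_map_zero n : ps_map h (ps_zero n) = ps_zero n.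
Proof. by apply: functional_extensionality => m; rewrite /ps_map rmorph0. Qed.

Lemma ps_map_one n : ps_map h (ps_one n) = ps_one n.
Proof.
by apply: functional_extensionality => m; rewrite /ps_map /ps_one; case: ifP; rewrite ?rmorph0 ?rmorph1.
Qed.

Lemma ps_map_var n (i : 'I_n) : ps_map h (ps_var T i) = ps_var T' i.
Proof.
by apply: functional_extensionality => m; rewrite /ps_map /ps_var; case: ifP; rewrite ?rmorph0 ?rmorph1.
Qed.

Lemma ps_map_mul n (f g : ps T n) : ps_map h (ps_mul f g) = ps_mul (ps_map h f) (ps_map h g).
Proof.
apply: functional_extensionality => m; rewrite /ps_map /ps_mul rmorph_sum.
by apply: eq_bigr => a _; rewrite rmorphM.
Qed.

Lemma ps_map_prodexp k n (g : 'I_k -> ps T n) e :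
  ps_map h (ps_prodexp g e) = ps_prodexp (fun i => ps_map h (g i)) e.
Proof.
rewrite /ps_prodexp (big_morph (@ps_map _ _ h n) (@ps_map_mul n) (ps_map_one n)).
apply: eq_bigr => i _; elim: (e i) => [|j IH]; first exact: ps_map_one.
by rewrite /= ps_map_mul -/(ps_exp (g i) j) IH.
Qed.

Lemma ps_map_subst k n (f : ps T k) (g : 'I_k -> ps T n) :
  ps_map h (ps_subst f g) = ps_subst (ps_map h f) (fun i => ps_map h (g i)).
Proof.
apply: functional_extensionality => m; rewrite {1}/ps_map /ps_subst rmorph_sum.
by apply: eq_bigr => e _; rewrite rmorphM -ps_map_prodexp.
Qed.

Lemma ps_map_zc n (f : ps T n) : zero_const f -> zero_const (ps_map h f).
Proof. by rewrite /zero_const /ps_map => ->; rewrite rmorph0. Qed.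

Lemma ps_map_addG (G : ps T 2) n (a b : ps T n) :
  ps_map h (addG G a b) = addG (ps_map h G) (ps_map h a) (ps_map h b).
Proof. by rewrite /addG ps_map_subst vec2_comp. Qed.

Lemma ps_map_negG (iG : ps T 1) n (a : ps T n) :
  ps_map h (negG iG a) = negG (ps_map h iG) (ps_map h a).
Proof. by rewrite /negG ps_map_subst. Qed.

Lemma ps_map_face (F : ps T 2) n i :
  (fun j => ps_map h (face F n i j)) = face (ps_map h F) n i.
Proof.
apply: functional_extensionality => j; rewrite /face.
case: ifP => _; first exact: ps_map_var.
case: ifP => _; last exact: ps_map_var.
by rewrite ps_map_subst vec2_comp !ps_map_var.
Qed.

Lemma ps_map_delta (F G : ps T 2) (iG : ps T 1) n (f : ps T n) :
  ps_map h (delta F G iG f) =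
  delta (ps_map h F) (ps_map h G) (ps_map h iG) (ps_map h f).
Proof.
rewrite /delta (big_morph (@ps_map _ _ h n.+1) (@ps_map_addG G n.+1) (ps_map_zero n.+1)).
apply: eq_bigr => i _.
by case: ifP => _; rewrite ?ps_map_negG ps_map_subst ps_map_face.
Qed.

Lemma is_fgl_map (G : ps T 2) : is_fgl G -> is_fgl (ps_map h G).
Proof.
case=> h1 h2 h3 h4; split.
- by move/(congr1 (@ps_map _ _ h 1)): h1; rewrite ps_map_subst vec2_comp !ps_map_var ps_map_zero.
- by move/(congr1 (@ps_map _ _ h 1)): h2; rewrite ps_map_subst vec2_comp !ps_map_var ps_map_zero.
- move/(congr1 (@ps_map _ _ h 3)): h3.
  by rewrite !ps_map_subst !vec2_comp !ps_map_subst !vec2_comp !ps_map_var.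
- by move/(congr1 (@ps_map _ _ h 2)): h4; rewrite ps_map_subst vec2_comp !ps_map_var.
Qed.

Lemma is_fgl_inv_map (G : ps T 2) (iG : ps T 1) :
  is_fgl_inv G iG -> is_fgl_inv (ps_map h G) (ps_map h iG).
Proof.
case=> h1 h2; split; first exact: ps_map_zc.
by move/(congr1 (@ps_map _ _ h 1)): h2; rewrite ps_map_subst vec2_comp !ps_map_var ps_map_zero.
Qed.

End RingMorphismMap.

(** * Formal group laws and the Lubin-Tate coboundary *)

Lemma fgl_zc (T : comPzRingType) (G : ps T 2) : is_fgl G -> zero_const G.
Proof.
case=> h1 _ _ _; move/(congr1 (fun f => f (fun _ => 0%N))): h1.
rewrite ps_subst0; last by apply: vec2_zc; [apply: ps_var_zc | done].
by rewrite /zero_const => ->; exact: ps_var_zc.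
Qed.

Definition vec3 (T : comPzRingType) n (a b c : ps T n) : 'I_3 -> ps T n :=
  fun i => if val i == 0%N then a else if val i == 1%N then b else c.

Section FormalGroupLaw.
Variables (T : comPzRingType) (G : ps T 2) (iG : ps T 1).
Hypotheses (hG : is_fgl G) (hiG : is_fgl_inv G iG).
Local Notation zc := zero_const.
Local Notation "a +G b" := (addG G a b) (at level 50, left associativity).
Local Notation "-G a" := (negG iG a) (at level 35).

Lemma addG_zc n (a b : ps T n) : zc a -> zc b -> zc (a +G b).
Proof. by move=> ha hb; apply: ps_subst_zc; [exact: fgl_zc | exact: vec2_zc]. Qed.

Lemma negG_zc n (a : ps T n) : zc a -> zc (-G a).
Proof. by move=> ha; apply: ps_subst_zc => //; case: hiG. Qed.

(* Each group axiom is an identity of power series in the formal variables;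
   substituting cochains for the variables turns it into the axiom for cochains. *)
Lemma add0G n (a : ps T n) : zc a -> ps_zero n +G a = a.
Proof.
move=> ha; case: hG => _ h2 _ _.
move/(congr1 (fun f => ps_subst f (fun _ : 'I_1 => a))): h2.
rewrite ps_substA //; last by apply: vec2_zc; [|apply: ps_var_zc].
by rewrite ps_subst_vec2 ps_subst_zero !ps_subst_var.
Qed.

Lemma addG0 n (a : ps T n) : zc a -> a +G ps_zero n = a.
Proof.
move=> ha; case: hG => h1 _ _ _.
move/(congr1 (fun f => ps_subst f (fun _ : 'I_1 => a))): h1.
rewrite ps_substA //; last by apply: vec2_zc; [apply: ps_var_zc|].
by rewrite ps_subst_vec2 ps_subst_zero !ps_subst_var.
Qed.

Lemma addGC n (a b : ps T n) : zc a -> zc b -> a +G b = b +G a.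
Proof.
move=> ha hb; case: hG => _ _ _ h4.
move/(congr1 (fun f => ps_subst f (vec2 a b))): h4.
rewrite ps_substA; [|by apply: vec2_zc; apply: ps_var_zc | exact: vec2_zc].
rewrite ps_subst_vec2 !ps_subst_var; try exact: vec2_zc.
by rewrite /addG => <-.
Qed.

Lemma addGA n (a b c : ps T n) : zc a -> zc b -> zc c -> a +G b +G c = a +G (b +G c).
Proof.
move=> ha hb hc; case: hG => _ _ h3 _.
have zv i : zc (vec3 a b c i) by rewrite /vec3; do 2?case: ifP.
have zx (i : 'I_3) := ps_var_zc T i.
have zGx (i j : 'I_3) : zc (ps_subst G (vec2 (ps_var T i) (ps_var T j))).
  by apply: ps_subst_zc; [exact: fgl_zc | exact: vec2_zc (zx i) (zx j)].
move/(congr1 (fun f => ps_subst f (vec3 a b c))): h3.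
rewrite !ps_substA //; try exact: vec2_zc.
by rewrite !ps_subst_vec2 !ps_substA //; try exact: vec2_zc; rewrite !ps_subst_vec2 !ps_subst_var.
Qed.

Lemma addGN n (a : ps T n) : zc a -> a +G -G a = ps_zero n.
Proof.
move=> ha; case: hiG => hi h.
move/(congr1 (fun f => ps_subst f (fun _ : 'I_1 => a))): h.
rewrite ps_substA //; last by apply: vec2_zc; [apply: ps_var_zc|].
by rewrite ps_subst_vec2 ps_subst_var // ps_subst_zero.
Qed.

Lemma addNG n (a : ps T n) : zc a -> -G a +G a = ps_zero n.
Proof. by move=> ha; rewrite addGC ?addGN //; exact: negG_zc. Qed.

Lemma addGNKr n (a b : ps T n) : zc a -> zc b -> a +G (-G a +G b) = b.
Proof. by move=> ha hb; rewrite -addGA ?addGN ?add0G //; exact: negG_zc. Qed.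

Lemma negG_unique n (a b : ps T n) : zc a -> zc b -> a +G b = ps_zero n -> b = -G a.
Proof.
move=> ha hb e; have zn := negG_zc ha.
by rewrite -(add0G hb) -(addNG ha) addGA // e addG0.
Qed.

Lemma addGACA n (a b c d : ps T n) : zc a -> zc b -> zc c -> zc d ->
  (a +G b) +G (c +G d) = (a +G c) +G (b +G d).
Proof.
move=> ha hb hc hd; have zcd := addG_zc hc hd; have zbd := addG_zc hb hd.
rewrite (addGA ha hb zcd) -(addGA hb hc hd) (addGC hb hc) (addGA hc hb hd).
by rewrite -(addGA ha hc zbd).
Qed.

Lemma negGD n (a b : ps T n) : zc a -> zc b -> -G (a +G b) = -G a +G -G b.
Proof.
move=> ha hb; have zna := negG_zc ha; have znb := negG_zc hb.
symmetry; apply: negG_unique; try exact: addG_zc.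
by rewrite addGACA // addGN // addGN // addG0.
Qed.

Lemma negG0 n : -G ps_zero n = ps_zero n.
Proof. by symmetry; apply: negG_unique => //; rewrite addG0. Qed.

Lemma ps_subst_addG k n (a b : ps T k) (d : 'I_k -> ps T n) : (forall i, zc (d i)) ->
  zc a -> zc b -> ps_subst (a +G b) d = ps_subst a d +G ps_subst b d.
Proof. by move=> hd ha hb; rewrite /addG ps_substA ?ps_subst_vec2 //; exact: vec2_zc. Qed.

Lemma big_addG_zc n k (F : 'I_k -> ps T n) : (forall i, zc (F i)) ->
  zc (\big[@addG T G n/ps_zero n]_(i < k) F i).
Proof. by move=> hF; apply: (big_ind (fun x => zc x)) => //; exact: addG_zc. Qed.

Lemma big_addG_split n k (F H : 'I_k -> ps T n) :
  (forall i, zc (F i)) -> (forall i, zc (H i)) ->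
  \big[@addG T G n/ps_zero n]_(i < k) (F i +G H i) =
  \big[@addG T G n/ps_zero n]_(i < k) F i +G \big[@addG T G n/ps_zero n]_(i < k) H i.
Proof.
elim: k F H => [|k IH] F H hF hH; first by rewrite !big_ord0 addG0.
by rewrite !big_ord_recl IH // addGACA //; exact: big_addG_zc.
Qed.

End FormalGroupLaw.

Section Coboundary.
Variables (T : comPzRingType) (F G : ps T 2) (iG : ps T 1).
Hypotheses (hF : is_fgl F) (hG : is_fgl G) (hiG : is_fgl_inv G iG).
Local Notation zc := zero_const.

Lemma face_zc n i j : zc (face F n i j).
Proof.
rewrite /face; case: ifP => _; first exact: ps_var_zc.
case: ifP => _; last exact: ps_var_zc.
by apply: ps_subst_zc; [exact: fgl_zc | apply: vec2_zc; exact: ps_var_zc].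
Qed.

Lemma ps_subst_face_zc n (f : ps T n) i : zc f -> zc (ps_subst f (face F n i)).
Proof. by move=> hf; apply: ps_subst_zc => // j; exact: face_zc. Qed.

Lemma delta_zc n (f : ps T n) : zc f -> zc (delta F G iG f).
Proof.
move=> hf; rewrite /delta; apply: big_addG_zc => // i.
have hs := ps_subst_face_zc i hf; case: ifP => _ //; exact: (negG_zc hiG).
Qed.

Lemma delta_addG n (a b : ps T n) : zc a -> zc b ->
  delta F G iG (addG G a b) = addG G (delta F G iG a) (delta F G iG b).
Proof.
move=> ha hb; have hs f i := @ps_subst_face_zc n f i.
rewrite /delta -big_addG_split //;
  try by move=> i; case: ifP => _; [apply: (negG_zc hiG)|]; apply: hs.
apply: eq_bigr => i _; rewrite ps_subst_addG //; last exact: face_zc.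
by case: ifP => _ //; rewrite (negGD hG hiG) //; apply: hs.
Qed.

Lemma delta_zero n : delta F G iG (ps_zero n) = ps_zero n.+1.
Proof.
rewrite /delta; apply: (big_ind (fun x => x = ps_zero n.+1)) => [//|_ _ -> ->|i _].
  exact: addG0.
by rewrite ps_subst_zero; case: ifP => _ //; rewrite (negG0 hG hiG).
Qed.

Lemma coboundary_zc n (b : ps T n) : coboundary F G iG b -> zc b.
Proof. by case: n b => [|k] b /=; [move-> | case=> g [hg ->]; exact: delta_zc]. Qed.

Lemma coboundary_zero n : coboundary F G iG (ps_zero n).
Proof. by case: n => [|k] //=; exists (ps_zero k); rewrite delta_zero. Qed.

Lemma cohomologous0 n (f : ps T n) :
  cohomologous F G iG f (ps_zero n) <-> coboundary F G iG f.
Proof.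
split=> [[b [hb ->]]|hf]; first by rewrite (add0G hG) //; exact: coboundary_zc.
by exists f; split => //; rewrite (add0G hG) //; exact: coboundary_zc.
Qed.

Lemma cohomologous_refl n (f : ps T n) : zc f -> cohomologous F G iG f f.
Proof. by move=> hf; exists (ps_zero n); rewrite (addG0 hG) //; split=> //; exact: coboundary_zero. Qed.

End Coboundary.

Section AdditiveFormalGroup.
Variable S : comPzRingType.
Local Notation zc := zero_const.

Lemma addG_ga n (a b : ps S n) : zc a -> zc b -> addG (ga_law S) a b = ps_add a b.
Proof.
by move=> ha hb; rewrite /addG /ga_law ps_subst_add !ps_subst_var //; exact: vec2_zc.
Qed.

Lemma negG_ga n (a : ps S n) : zc a -> negG (ga_inv S) a = ps_opp a.
Proof. by move=> ha; rewrite /negG /ga_inv ps_subst_opp ps_subst_var. Qed.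

Lemma is_fgl_ga : is_fgl (ga_law S).
Proof.
have zx k (i : 'I_k) := ps_var_zc S i.
rewrite /is_fgl -!/(addG _ _ _) !addG_ga //; try by apply: ps_add_zc.
split; apply: functional_extensionality => m; rewrite /ps_add /= ?addr0 ?add0r ?addrA //.
exact: addrC.
Qed.

Lemma is_fgl_inv_ga : is_fgl_inv (ga_law S) (ga_inv S).
Proof.
have zi : zc (ga_inv S) by apply: ps_opp_zc; exact: ps_var_zc.
split=> //; rewrite -/(addG _ _ _) addG_ga //; last exact: ps_var_zc.
by apply: functional_extensionality => m; rewrite /ps_add /ga_inv /ps_opp subrr.
Qed.

End AdditiveFormalGroup.

(** * Dual numbers and the tangent part of a cochain *)

Section DualNumberMorphisms.
Variable S : comPzRingType.

Lemma dual_mulE (a b c d : S) : ((a, b) : dual S) * (c, d) = (a * c, a * d + b * c).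
Proof. by []. Qed.

Lemma to_dual_is_zmod_morphism : zmod_morphism (@to_dual S).
Proof. by move=> x y; rewrite /to_dual; congr pair; rewrite /= subr0. Qed.

Lemma to_dual_is_monoid_morphism : monoid_morphism (@to_dual S).
Proof. by split=> // x y; rewrite /to_dual; congr pair; rewrite /= mulr0 mul0r addr0. Qed.

HB.instance Definition _ :=
  GRing.isZmodMorphism.Build S (dual S) (@to_dual S) to_dual_is_zmod_morphism.
HB.instance Definition _ :=
  GRing.isMonoidMorphism.Build S (dual S) (@to_dual S) to_dual_is_monoid_morphism.

Lemma dual_red_is_zmod_morphism : zmod_morphism (@dual_red S).
Proof. by []. Qed.

Lemma dual_red_is_monoid_morphism : monoid_morphism (@dual_red S).
Proof. by []. Qed.

HB.instance Definition _ :=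
  GRing.isZmodMorphism.Build (dual S) S (@dual_red S) dual_red_is_zmod_morphism.
HB.instance Definition _ :=
  GRing.isMonoidMorphism.Build (dual S) S (@dual_red S) dual_red_is_monoid_morphism.

Variables (S' : comPzRingType) (h : {rmorphism S -> S'}).

Lemma dual_map_is_zmod_morphism : zmod_morphism (dual_map h).
Proof. by move=> x y; rewrite /dual_map /= !rmorphB. Qed.

Lemma dual_map_is_monoid_morphism : monoid_morphism (dual_map h).
Proof.
split; first by rewrite /dual_map /= rmorph0 rmorph1.
by move=> x y; rewrite /dual_map /= rmorphD !rmorphM.
Qed.

HB.instance Definition _ :=
  GRing.isZmodMorphism.Build (dual S) (dual S') (dual_map h) dual_map_is_zmod_morphism.
HB.instance Definition _ :=
  GRing.isMonoidMorphism.Build (dual S) (dual S') (dual_map h) dual_map_is_monoid_morphism.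

End DualNumberMorphisms.

Section EpsilonMultiples.
Variable S : comPzRingType.
Local Notation D := (dual S).
Local Notation zc := zero_const.
Local Notation incl := (ps_map (@to_dual S)).
Local Notation red := (ps_map (@dual_red S)).

Definition ps_eps n (w : ps S n) : ps D n := ps_map (fun s => (0, s) : D) w.
Definition ps_eps_coef n (z : ps D n) : ps S n := ps_map (fun x : D => x.2) z.

Lemma ps_eps_zc n (w : ps S n) : zc w -> zc (ps_eps w).
Proof. by rewrite /zero_const /ps_eps /ps_map => ->. Qed.

Lemma ps_red_incl n (f : ps S n) : red (incl f) = f.
Proof. by []. Qed.

Lemma ps_red_eps n (w : ps S n) : red (ps_eps w) = ps_zero n.
Proof. by []. Qed.

Lemma ps_eps_zero n : ps_eps (ps_zero n) = ps_zero n.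
Proof. by []. Qed.

Lemma ps_eps_coefK n (w : ps S n) : ps_eps_coef (ps_eps w) = w.
Proof. by []. Qed.

Lemma ps_eps_coef_red0 n (z : ps D n) : red z = ps_zero n -> ps_eps (ps_eps_coef z) = z.
Proof.
move=> hz; apply: functional_extensionality => m.
have := congr1 (fun f => f m) hz; rewrite /ps_eps /ps_eps_coef /ps_map /dual_red /=.
by case: (z m) => a b /= ->.
Qed.

Lemma ps_eps_add n (a b : ps S n) : ps_eps (ps_add a b) = ps_add (ps_eps a) (ps_eps b).
Proof.
by apply: functional_extensionality => m; rewrite /ps_eps /ps_map /ps_add; congr pair; rewrite /= addr0.
Qed.

Lemma ps_mul_red0 n (a b : ps D n) :
  red a = ps_zero n -> red b = ps_zero n -> ps_mul a b = ps_zero n.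
Proof.
move=> ha hb; rewrite -(ps_eps_coef_red0 ha) -(ps_eps_coef_red0 hb).
apply: functional_extensionality => m; apply: big1 => u _.
by rewrite /ps_eps /ps_map dual_mulE !mul0r mulr0 addr0.
Qed.

Lemma mon2_eq0 (e : mon 2) : e ord0 = 0%N -> e (lift ord0 ord0) = 0%N -> e = (fun _ => 0%N).
Proof.
move=> h0 h1; apply: functional_extensionality => -[[|[|//]] Hi].
- by have -> : Ordinal Hi = ord0 by apply: val_inj.
- by have -> : Ordinal Hi = lift ord0 ord0 by apply: val_inj.
Qed.

(* Since eps^2 = 0, a series without constant term evaluated at two
   eps-multiples splits into its two one-variable parts. *)
Lemma ps_subst_vec2_red0 n (f : ps D 2) (u v : ps D n) :
  zc f -> red u = ps_zero n -> red v = ps_zero n ->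
  ps_subst f (vec2 u v) =
  ps_add (ps_subst f (vec2 u (ps_zero n))) (ps_subst f (vec2 (ps_zero n) v)).
Proof.
move=> hf hu hv; apply: functional_extensionality => m.
rewrite /ps_subst /ps_add -big_split; apply: eq_bigr => e _.
rewrite [RHS]/= -mulrDr !ps_prodexp_vec2.
have hexp (w : ps D n) k : red w = ps_zero n -> red (ps_exp w k.+1) = ps_zero n.
  by move=> hw; rewrite /= ps_map_mul hw ps_mul0l.
have exp0 k : ps_exp (ps_zero n) k.+1 = ps_zero n by rewrite /= ps_mul0l.
case E0: (nat_of_ord (e ord0)) => [|k0]; case E1: (nat_of_ord (e (lift ord0 ord0))) => [|k1].
- by rewrite (mon2_eq0 (e := fun i => nat_of_ord (e i))) // hf !mul0r.
- by rewrite exp0 ps_mul0r /ps_zero add0r.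
- by rewrite exp0 ps_mul0l /ps_zero addr0.
- by rewrite ps_mul_red0 ?hexp // !exp0 ps_mul0l ps_mul0r /ps_zero addr0.
Qed.

Section AnyFormalGroupLaw.
Variables (G : ps D 2) (iG : ps D 1).
Hypotheses (hG : is_fgl G) (hiG : is_fgl_inv G iG).

Lemma addG_eps n (a b : ps S n) : zc a -> zc b ->
  addG G (ps_eps a) (ps_eps b) = ps_eps (ps_add a b).
Proof.
move=> ha hb; rewrite ps_eps_add /addG ps_subst_vec2_red0 //; last exact: fgl_zc.
have e1 := addG0 hG (ps_eps_zc ha); have e2 := add0G hG (ps_eps_zc hb).
by rewrite /addG in e1 e2; rewrite e1 e2.
Qed.

Lemma negG_eps n (a : ps S n) : zc a -> negG iG (ps_eps a) = ps_eps (ps_opp a).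
Proof.
move=> ha; have hn := ps_opp_zc ha.
symmetry; apply: (negG_unique hG hiG); try exact: ps_eps_zc.
rewrite addG_eps //; congr ps_eps.
by apply: functional_extensionality => m; rewrite /ps_add /ps_opp subrr.
Qed.

Lemma ps_subst_eps_incl k n (f : ps S k) (g : 'I_k -> ps S n) :
  ps_subst (ps_eps f) (fun i => incl (g i)) = ps_eps (ps_subst f g).
Proof.
apply: functional_extensionality => m; rewrite /ps_subst {2}/ps_eps /ps_map.
have eps_morph : {morph (fun s => (0, s) : D) : x y / x + y}.
  by move=> x y; congr pair; rewrite /= addr0.
rewrite [RHS](big_morph _ eps_morph (id1 := 0)) //.
apply: eq_bigr => e _; rewrite -ps_map_prodexp.
by rewrite /ps_eps /ps_map /to_dual dual_mulE mul0r mulr0 add0r.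
Qed.

Lemma delta_eps (F : ps S 2) n (w : ps S n) : is_fgl F -> zc w ->
  delta (incl F) G iG (ps_eps w) = ps_eps (delta F (ga_law S) (ga_inv S) w).
Proof.
move=> hF hw; rewrite /delta.
apply: (proj1 (big_ind2 (fun x y => x = ps_eps y /\ zc y) _ _ _)) => //.
- move=> x1 x2 y1 y2 [-> z1] [-> z2]; split; last exact: (addG_zc (is_fgl_ga S)).
  by rewrite addG_eps // addG_ga.
- move=> i _; have zs := ps_subst_face_zc hF i hw.
  rewrite -(ps_map_face (@to_dual S)) ps_subst_eps_incl.
  case: ifP => _ //; split; last exact: (negG_zc (is_fgl_inv_ga S)).
  by rewrite negG_eps // negG_ga.
Qed.

End AnyFormalGroupLaw.
End EpsilonMultiples.

Section TangentPart.
Variables (S : comPzRingType) (Gs : ps S 2) (iGs : ps S 1).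
Hypotheses (hG : is_fgl Gs) (hiG : is_fgl_inv Gs iGs).
Local Notation D := (dual S).
Local Notation zc := zero_const.
Local Notation incl := (ps_map (@to_dual S)).
Local Notation red := (ps_map (@dual_red S)).
Local Notation Gd := (incl Gs).
Local Notation iGd := (incl iGs).

Let hGd : is_fgl Gd := is_fgl_map _ hG.
Let hiGd : is_fgl_inv Gd iGd := is_fgl_inv_map _ hiG.

Definition tangent_part n (z : ps D n) : ps S n :=
  ps_eps_coef (addG Gd z (negG iGd (incl (red z)))).

Lemma tangent_part_red0 n (z : ps D n) : zc z ->
  red (addG Gd z (negG iGd (incl (red z)))) = ps_zero n.
Proof.
move=> hz; rewrite ps_map_addG ps_map_negG !ps_red_incl.
by apply: (addGN hiG); exact: ps_map_zc.
Qed.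

Lemma tangent_part_zc n (z : ps D n) : zc z -> zc (tangent_part z).
Proof.
move=> hz; have hr := ps_map_zc (@to_dual S) (ps_map_zc (@dual_red S) hz).
have := addG_zc hGd hz (negG_zc hiGd hr).
by rewrite /zero_const /tangent_part /ps_eps_coef /ps_map => ->.
Qed.

Lemma tangent_decomp n (z : ps D n) : zc z ->
  z = addG Gd (incl (red z)) (ps_eps (tangent_part z)).
Proof.
move=> hz; have hr := ps_map_zc (@to_dual S) (ps_map_zc (@dual_red S) hz).
rewrite /tangent_part ps_eps_coef_red0; last exact: tangent_part_red0.
by rewrite (addGC hGd hz (negG_zc hiGd hr)) (addGNKr hGd hiGd hr hz).
Qed.

Lemma tangent_part_eq n (z : ps D n) (a w : ps S n) : zc a -> zc w ->
  z = addG Gd (incl a) (ps_eps w) -> tangent_part z = w.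
Proof.
move=> ha hw ->; have hia := ps_map_zc (@to_dual S) ha; have hew := ps_eps_zc hw.
rewrite /tangent_part ps_map_addG ps_red_incl ps_red_eps (addG0 hG) //.
rewrite (addGC hGd hia hew) (addGA hGd hew hia (negG_zc hiGd hia)).
by rewrite (addGN hiGd hia) (addG0 hGd hew) ps_eps_coefK.
Qed.

Lemma tangent_part_zero n : tangent_part (ps_zero n) = ps_zero n.
Proof.
by apply: (tangent_part_eq (a := ps_zero n)) => //; rewrite ps_map_zero ps_eps_zero (addG0 hGd).
Qed.

Lemma tangent_partD n (z z' : ps D n) : zc z -> zc z' ->
  tangent_part (addG Gd z z') = addG (ga_law S) (tangent_part z) (tangent_part z').
Proof.
move=> hz hz'; have hw := tangent_part_zc hz; have hw' := tangent_part_zc hz'.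
have hr := ps_map_zc (@dual_red S) hz; have hr' := ps_map_zc (@dual_red S) hz'.
rewrite addG_ga //; apply: (tangent_part_eq (a := addG Gs (red z) (red z'))).
- exact: addG_zc.
- exact: ps_add_zc.
rewrite {1}(tangent_decomp hz) {1}(tangent_decomp hz').
rewrite (addGACA hGd) ?ps_map_addG -?(addG_eps hGd) //;
  by [apply: ps_map_zc | apply: ps_eps_zc].
Qed.

End TangentPart.

Lemma tangent_part_map (S S' : comPzRingType) (h : {rmorphism S -> S'})
    (Gs : ps S 2) (iGs : ps S 1) n (z : ps (dual S) n) :
  tangent_part (ps_map h Gs) (ps_map h iGs) (ps_map (dual_map h) z) =
  ps_map h (tangent_part Gs iGs z).
Proof.
have incl_map k (a : ps S k) : ps_map (@to_dual S') (ps_map h a) =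
                                ps_map (dual_map h) (ps_map (@to_dual S) a).
  by apply: functional_extensionality => m; rewrite /ps_map /dual_map /to_dual /= rmorph0.
by rewrite /tangent_part !incl_map -ps_map_negG -ps_map_addG.
Qed.

Section TangentCohomology.
Variables (S : comPzRingType) (Fs Gs : ps S 2) (iGs : ps S 1).
Hypotheses (hF : is_fgl Fs) (hG : is_fgl Gs) (hiG : is_fgl_inv Gs iGs).
Local Notation D := (dual S).
Local Notation zc := zero_const.
Local Notation incl := (ps_map (@to_dual S)).
Local Notation red := (ps_map (@dual_red S)).
Local Notation Fd := (incl Fs).
Local Notation Gd := (incl Gs).
Local Notation iGd := (incl iGs).
Local Notation ga := (ga_law S).
Local Notation gi := (ga_inv S).
Local Notation tangent := (tangent_part Gs iGs).

Let hFd : is_fgl Fd := is_fgl_map _ hF.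
Let hGd : is_fgl Gd := is_fgl_map _ hG.
Let hiGd : is_fgl_inv Gd iGd := is_fgl_inv_map _ hiG.

Lemma delta_tangent_decomp n (a w : ps S n) : zc a -> zc w ->
  delta Fd Gd iGd (addG Gd (incl a) (ps_eps w)) =
  addG Gd (incl (delta Fs Gs iGs a)) (ps_eps (delta Fs ga gi w)).
Proof.
move=> ha hw; have hia := ps_map_zc (@to_dual S) ha.
rewrite (delta_addG hFd hGd hiGd hia (ps_eps_zc hw)) (delta_eps hGd hiGd hF hw).
by rewrite ps_map_delta.
Qed.

Lemma tangent_part_cocycle n (z : ps D n) :
  cocycle Fd Gd iGd z -> cocycle Fs ga gi (tangent z).
Proof.
case=> hz dz; have hw := tangent_part_zc hG hiG hz; split => //.
have dr : delta Fs Gs iGs (red z) = ps_zero n.+1.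
  by move/(congr1 (@ps_map _ _ (@dual_red S) n.+1)): dz; rewrite ps_map_delta ps_map_zero.
have hr := ps_map_zc (@dual_red S) hz.
move: dz; rewrite {1}(tangent_decomp hG hiG hz) (delta_tangent_decomp hr hw) dr => E.
rewrite -(tangent_part_zero hG hiG n.+1) -E; symmetry.
apply: (tangent_part_eq hG hiG (a := ps_zero n.+1)) => //.
exact: (delta_zc hF (is_fgl_ga S) (is_fgl_inv_ga S)).
Qed.

Lemma tangent_partD_cohomologous n (z z' : ps D n) : zc z -> zc z' ->
  cohomologous Fs ga gi (tangent (addG Gd z z')) (addG ga (tangent z) (tangent z')).
Proof.
move=> hz hz'; rewrite (tangent_partD hG hiG) //.
apply: (cohomologous_refl _ (is_fgl_ga S) (is_fgl_inv_ga S)).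
by apply: (addG_zc (is_fgl_ga S)); exact: tangent_part_zc.
Qed.

Lemma tangent_part_coboundary n (z : ps D n) : zc z -> coboundary Fs Gs iGs (red z) ->
  (coboundary Fd Gd iGd z <-> coboundary Fs ga gi (tangent z)).
Proof.
move=> hz; case: n z hz => [|k] z hz /= hr.
  split=> [->|hp]; first exact: (tangent_part_zero hG hiG).
  by rewrite (tangent_decomp hG hiG hz) hr hp ps_map_zero ps_eps_zero (addG0 hGd).
case: hr => g1 [hg1 er]; split=> [[g [hg ->]]|[g [hg eg]]].
  have hr := ps_map_zc (@dual_red S) hg; have hw := tangent_part_zc hG hiG hg.
  exists (tangent g); split => //.
  rewrite {1}(tangent_decomp hG hiG hg) (delta_tangent_decomp hr hw).
  apply: (tangent_part_eq hG hiG (delta_zc hF hG hiG hr)) => //.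
  exact: (delta_zc hF (is_fgl_ga S) (is_fgl_inv_ga S) hw).
exists (addG Gd (incl g1) (ps_eps g)); split.
  by apply: (addG_zc hGd); [exact: ps_map_zc | exact: ps_eps_zc].
by rewrite delta_tangent_decomp // -er -eg -(tangent_decomp hG hiG).
Qed.

Lemma tangent_part_cohomologous0 n (z : ps D n) :
  cocycle Fd Gd iGd z -> cohomologous Fs Gs iGs (red z) (ps_zero n) ->
  (cohomologous Fd Gd iGd z (ps_zero n) <-> cohomologous Fs ga gi (tangent z) (ps_zero n)).
Proof.
move=> [hz _] /(cohomologous0 hF hG hiG) hr.
rewrite (cohomologous0 hFd hGd hiGd) (cohomologous0 hF (is_fgl_ga S) (is_fgl_inv_ga S)).
exact: tangent_part_coboundary.
Qed.

Lemma tangent_part_surjective n (w : ps S n) : cocycle Fs ga gi w ->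
  exists z, (cocycle Fd Gd iGd z /\ cohomologous Fs Gs iGs (red z) (ps_zero n)) /\
            cohomologous Fs ga gi (tangent z) w.
Proof.
case=> hw dw; exists (ps_eps w); split; [split; [split|]|].
- exact: ps_eps_zc.
- by rewrite (delta_eps hGd hiGd) // dw.
- by rewrite ps_red_eps; apply/(cohomologous0 hF hG hiG); exact: coboundary_zero.
rewrite (tangent_part_eq hG hiG (a := ps_zero n) (w := w)) //.
  exact: (cohomologous_refl _ (is_fgl_ga S) (is_fgl_inv_ga S)).
by rewrite ps_map_zero (add0G hGd) //; exact: ps_eps_zc.
Qed.

End TangentCohomology.

Theorem mainTheorem3 (R : comPzRingType) (F G : ps R 2) (iG : ps R 1) :
  is_fgl F -> is_fgl G -> is_fgl_inv G iG ->
  forall n : nat,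
  exists Phi : forall S : comPzRingType, {rmorphism R -> S} -> ps (dual S) n -> ps S n,
    (forall (S : comPzRingType) (phi : {rmorphism R -> S}) z,
       inT1 phi F G iG z ->
       cocycle (ps_map phi F) (ga_law S) (ga_inv S) (Phi S phi z)) /\
    (forall (S : comPzRingType) (phi : {rmorphism R -> S}) z z',
       inT1 phi F G iG z -> inT1 phi F G iG z' ->
       cohomologous (ps_map phi F) (ga_law S) (ga_inv S)
         (Phi S phi (addG (ps_map (fun r => to_dual (phi r)) G) z z'))
         (addG (ga_law S) (Phi S phi z) (Phi S phi z'))) /\
    (forall (S : comPzRingType) (phi : {rmorphism R -> S}) z,
       inT1 phi F G iG z ->
       (cohomologous (ps_map (fun r => to_dual (phi r)) F)
                     (ps_map (fun r => to_dual (phi r)) G)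
                     (ps_map (fun r => to_dual (phi r)) iG) z (ps_zero n)
        <-> cohomologous (ps_map phi F) (ga_law S) (ga_inv S)
                         (Phi S phi z) (ps_zero n))) /\
    (forall (S : comPzRingType) (phi : {rmorphism R -> S}) w,
       cocycle (ps_map phi F) (ga_law S) (ga_inv S) w ->
       exists z, inT1 phi F G iG z /\
         cohomologous (ps_map phi F) (ga_law S) (ga_inv S) (Phi S phi z) w) /\
    (forall (S S' : comPzRingType) (phi : {rmorphism R -> S})
            (phi' : {rmorphism R -> S'}) (h : {rmorphism S -> S'}),
       (forall r, h (phi r) = phi' r) ->
       forall z, inT1 phi F G iG z ->
       cohomologous (ps_map phi' F) (ga_law S') (ga_inv S')
         (Phi S' phi' (ps_map (dual_map h) z)) (ps_map h (Phi S phi z))).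
Proof.
move=> hF hG hiG n.
exists (fun (S : comPzRingType) (phi : {rmorphism R -> S}) =>
          @tangent_part S (ps_map phi G) (ps_map phi iG) n).
split; [|split; [|split; [|split]]].
- move=> S phi z [hz _].
  exact: (tangent_part_cocycle (is_fgl_map phi hF) (is_fgl_map phi hG) (is_fgl_inv_map phi hiG)).
- move=> S phi z z' [[hz _] _] [[hz' _] _]; rewrite (ps_map_comp (@to_dual S) phi).
  exact: (tangent_partD_cohomologous _ (is_fgl_map phi hG) (is_fgl_inv_map phi hiG)).
- move=> S phi z [hz hr]; rewrite !(ps_map_comp (@to_dual S) phi).
  exact: (tangent_part_cohomologous0 (is_fgl_map phi hF) (is_fgl_map phi hG) (is_fgl_inv_map phi hiG)).
- move=> S phi w hw.
  exact: (tangent_part_surjective (is_fgl_map phi hF) (is_fgl_map phi hG) (is_fgl_inv_map phi hiG)).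
- move=> S S' phi phi' h hcomp z [[hz _] _].
  have map_comp k (f : ps R k) : ps_map phi' f = ps_map h (ps_map phi f).
    by apply: functional_extensionality => m; rewrite /ps_map hcomp.
  rewrite /= !map_comp tangent_part_map.
  apply: (cohomologous_refl _ (is_fgl_ga S') (is_fgl_inv_ga S')); apply: ps_map_zc.
  exact: (tangent_part_zc (is_fgl_map phi hG) (is_fgl_inv_map phi hiG)).
Qed.
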